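(* Let $D$ be a Newton diagram in $2$ variables whose support $K$ has size $d$, is connected, and contains $(0,0)$. Then $\#(D)\ge\frac{d+5}{2}$.
   Context: For $m\in\mathbb Z^n$ write $|m|=m_1+\dots+m_n$; $e_1,\dots,e_n$ is the standard basis. A Newton diagram in $n$ variables is a function $D\colon\mathbb Z^n\to\{0,P,N\}$ ($P,N$ formal symbols) whose support $K=D^{-1}(\{P,N\})$ is a finite nonempty subset of $\mathbb N_0^n$. For $a\in\mathbb Z^n$ let $E(a)=\{a,a-e_1,\dots,a-e_n\}$; $E(a)$ is a node of $D$ if the image $D(E(a))$ equals $\{P\}$, $\{N\}$, $\{0,P\}$ or $\{0,N\}$. $\#(D)$ is the number of $a\in\mathbb Z^n$ for which $E(a)$ is a node. Two distinct points $m,m'$ are adjacent if $m-m'\in\{\pm e_j\}\cup\{e_j-e_k: j\ne k\}$; $K$ is connected if any two points of $K$ are joined by a path of successively adjacent points of $K$. The size of $K$ is $k-|a|+1$ where $k=\max_{m\in K}|m|$ and $a_j=\min_{m\in K}m_j$. *)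

From Stdlib Require Import ZArith List Relations.
Import ListNotations.
Open Scope Z_scope.

Inductive sym : Type := S0 | SP | SN.

Definition pt := (Z * Z)%type.

Definition support (D : pt -> sym) (m : pt) : Prop := D m <> S0.

Definition newton_diagram (D : pt -> sym) : Prop :=
  (exists l : list pt, forall m, support D m -> In m l) /\
  (exists m, support D m) /\
  (forall m, support D m -> 0 <= fst m /\ 0 <= snd m).

Definition E (a : pt) : list pt :=
  [a; (fst a - 1, snd a); (fst a, snd a - 1)].

Definition is_node (D : pt -> sym) (a : pt) : Prop :=
  exists S : list sym, In S [[SP]; [SN]; [S0; SP]; [S0; SN]] /\
    forall s, In s (map D (E a)) <-> In s S.

Definition num_nodes (D : pt -> sym) (n : nat) : Prop :=
  exists l : list pt, NoDup l /\ (forall a, is_node D a <-> In a l) /\ length l = n.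

Definition adjacent (m m' : pt) : Prop :=
  m <> m' /\
  In (fst m - fst m', snd m - snd m') [(1,0); (-1,0); (0,1); (0,-1); (1,-1); (-1,1)].

Definition connected_support (D : pt -> sym) : Prop :=
  forall p q, support D p -> support D q ->
    clos_refl_trans pt (fun x y => support D x /\ support D y /\ adjacent x y) p q.

Definition support_size (D : pt -> sym) (d : Z) : Prop :=
  exists k a1 a2 : Z,
    ((exists m, support D m /\ fst m + snd m = k) /\
      forall m, support D m -> fst m + snd m <= k) /\
    ((exists m, support D m /\ fst m = a1) /\
      forall m, support D m -> a1 <= fst m) /\
    ((exists m, support D m /\ snd m = a2) /\
      forall m, support D m -> a2 <= snd m) /\
    d = k - (a1 + a2) + 1.

From Stdlib Require Import ZArith List Relations Lia Bool FinFun.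
Import ListNotations.
Open Scope bool_scope.
Open Scope Z_scope.

(* Cut the plane into the levels L_s = {m : m1 + m2 = s}.  A node
   E(a) with |a| = s+1 only involves D on L_(s+1) (at a) and on L_s (at a - e1,
   a - e2), so the nodes on L_(s+1) are counted by scanning the words "D on L_s"
   and "D on L_(s+1)" in parallel.  To a word w attach the potential
   P(w) = [w <> 0] + #(consecutive nonzero letters of equal sign) + #(zero gaps).
   A potential function on the states of this parallel scan, verified by
   exhaustive enumeration, gives, with N_s the number of nodes on L_s:
   - 2 N_(s+1) + P(L_(s+1)) - P(L_s) >= 1 when an edge of K joins L_s to L_(s+1);
   - 2 N_(k+1) - P(L_k) >= 3 when L_k meets K and L_(k+1) does not.
   As K is connected and contains 0, each level below k is joined to the next;
   with N_0 = P(L_0) = 1 the inequalities telescope to 2 #(D) >= k + 6 = d + 5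
   (the origin forces a = 0, so d = k + 1). *)

Definition nz (c : sym) : bool := match c with S0 => false | _ => true end.
Definition isP (c : sym) : bool := match c with SP => true | _ => false end.
Definition isN (c : sym) : bool := match c with SN => true | _ => false end.
Definition node3 (a b c : sym) : bool :=
  (nz a || nz b || nz c) && negb ((isP a || isP b || isP c) && (isN a || isN b || isN c)).

Definition sym_eqb (s t : sym) : bool :=
  match s, t with S0, S0 | SP, SP | SN, SN => true | _, _ => false end.

Lemma In_sym_iff (s : sym) (l : list sym) : In s l <-> existsb (sym_eqb s) l = true.
Proof.
  induction l as [|a l IH]; cbn; [split; [tauto|discriminate]|].
  rewrite orb_true_iff, <- IH.
  destruct s, a; cbn; intuition congruence.
Qed.

Lemma node3_spec (x y z : sym) :
  (exists S : list sym, In S [[SP]; [SN]; [S0; SP]; [S0; SN]] /\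
     forall s, In s [x; y; z] <-> In s S) <-> node3 x y z = true.
Proof.
  setoid_rewrite In_sym_iff. split.
  - intros [S [HS Hset]].
    pose proof (Hset S0) as H0; pose proof (Hset SP) as HP; pose proof (Hset SN) as HN.
    destruct HS as [<-|[<-|[<-|[<-|[]]]]];
      destruct x, y, z; cbn in *; try reflexivity;
      first [ discriminate (proj1 H0 eq_refl) | discriminate (proj2 H0 eq_refl)
            | discriminate (proj1 HP eq_refl) | discriminate (proj2 HP eq_refl)
            | discriminate (proj1 HN eq_refl) | discriminate (proj2 HN eq_refl) ].
  - intro H.
    destruct x, y, z; cbn in H; try discriminate H;
      first [ solve [exists [SP]; split; [cbn; tauto | intros []; reflexivity]]
            | solve [exists [SN]; split; [cbn; tauto | intros []; reflexivity]]
            | solve [exists [S0; SP]; split; [cbn; tauto | intros []; reflexivity]]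
            | solve [exists [S0; SN]; split; [cbn; tauto | intros []; reflexivity]] ].
Qed.

Lemma node3_nonzero (x y z : sym) :
  node3 x y z = true -> x <> S0 \/ y <> S0 \/ z <> S0.
Proof. destruct x, y, z; cbn; first [discriminate | intuition discriminate]. Qed.

Definition is_nodeb (D : pt -> sym) (a : pt) : bool :=
  node3 (D a) (D (fst a - 1, snd a)) (D (fst a, snd a - 1)).

Lemma is_node_iff (D : pt -> sym) (a : pt) : is_node D a <-> is_nodeb D a = true.
Proof. apply node3_spec. Qed.

Lemma nz_true (c : sym) : c <> S0 -> nz c = true.
Proof. destruct c; cbn; congruence. Qed.

(* The scan state is
   the last nonzero letter read, if any, and whether a zero was read after it;
   the accumulated value is the potential P of the prefix read so far. *)
Definition word_state := (option sym * bool)%type.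

Definition letter_step (st : word_state) (c : sym) : word_state * Z :=
  match c with
  | S0 => match st with (None, _) => ((None, false), 0) | (Some l, _) => ((Some l, true), 0) end
  | _ => ((Some c, false),
          1 - (match st with (Some l, _) => if sym_eqb l c then 0 else 1 | _ => 0 end)
            + (match st with (Some _, true) => 1 | _ => 0 end))
  end.

Fixpoint word_scan (w : nat -> sym) (n : nat) : word_state * Z :=
  match n with
  | O => ((None, false), 0)
  | S m => let p := word_scan w m in
           (fst (letter_step (fst p) (w m)), snd p + snd (letter_step (fst p) (w m)))
  end.

Lemma word_scan_zero (w : nat -> sym) (n : nat) :
  (forall x, (x < n)%nat -> w x = S0) -> word_scan w n = ((None, false), 0).
Proof.
  intro H. induction n as [|n IH]; [reflexivity|].
  cbn. rewrite IH by (intros; apply H; lia). rewrite H by lia. reflexivity.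
Qed.

Lemma word_scan_nonzero (w : nat -> sym) (n x : nat) :
  (x < n)%nat -> w x <> S0 -> fst (fst (word_scan w n)) <> None.
Proof.
  intros Hx H. induction n as [|n IH]; [lia|].
  cbn. destruct (Nat.eq_dec x n) as [->|Hne].
  - destruct (w n); cbn; congruence.
  - specialize (IH ltac:(lia)).
    destruct (word_scan w n) as [[[l|] g] a]; cbn in *; [|congruence].
    destruct (w n); cbn; congruence.
Qed.

Lemma word_scan_zero_letter (w : nat -> sym) (n : nat) :
  w n = S0 -> snd (word_scan w (S n)) = snd (word_scan w n).
Proof.
  intro H. cbn. rewrite H. destruct (word_scan w n) as [[[l|] g] a]; cbn; ring.
Qed.

(* Position x of v sees
   the letters u (x-1) and u x below it; [node_count] counts the positions where
   these three letters form a node, and [linked] records whether some nonzero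
   letter of v sits above a nonzero letter of u in this way. *)
Definition prev (u : nat -> sym) (x : nat) : sym :=
  match x with O => S0 | S k => u k end.

Fixpoint node_count (u v : nat -> sym) (n : nat) : Z :=
  match n with
  | O => 0
  | S m => node_count u v m + (if node3 (v m) (prev u m) (u m) then 1 else 0)
  end.

Fixpoint linked (u v : nat -> sym) (n : nat) : bool :=
  match n with
  | O => false
  | S m => linked u v m || (nz (v m) && (nz (prev u m) || nz (u m)))
  end.

Lemma linked_intro (u v : nat -> sym) (n x : nat) : (x < n)%nat ->
  nz (v x) && (nz (prev u x) || nz (u x)) = true -> linked u v n = true.
Proof.
  intros Hx H. induction n as [|n IH]; [lia|].
  cbn. destruct (Nat.eq_dec x n) as [->|Hne].
  - rewrite H. apply orb_true_r.
  - rewrite IH by lia. reflexivity.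
Qed.

Definition joint_state := (sym * word_state * word_state * bool)%type.

Definition joint_step (st : joint_state) (cu cv : sym) : joint_state * Z :=
  let '(up, su, sv, lk) := st in
  ((cu, fst (letter_step su cu), fst (letter_step sv cv), lk || (nz cv && (nz up || nz cu))),
   2 * (if node3 cv up cu then 1 else 0) + snd (letter_step sv cv) - snd (letter_step su cu)).

Definition scan_state (u v : nat -> sym) (n : nat) : joint_state :=
  (prev u n, fst (word_scan u n), fst (word_scan v n), linked u v n).

Definition scan_value (u v : nat -> sym) (n : nat) : Z :=
  2 * node_count u v n + snd (word_scan v n) - snd (word_scan u n).

Lemma scan_succ (u v : nat -> sym) (n : nat) :
  scan_state u v (S n) = fst (joint_step (scan_state u v n) (u n) (v n)) /\
  scan_value u v (S n) = scan_value u v n + snd (joint_step (scan_state u v n) (u n) (v n)).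
Proof.
  split; [reflexivity|].
  unfold scan_value, scan_state, joint_step. cbn [word_scan node_count fst snd]. ring.
Qed.

(* A lower bound for the accumulated value in terms of the current state, found
   by exploring the automaton; [None] marks states that are never reached. *)
Definition bound (st : joint_state) : option Z :=
  match st with (up, (lu, gu), (lv, gv), lk) =>
  match up, lu, gu, lv, gv, lk with
  | S0, None, false, None, false, false => Some 0
  | S0, None, false, Some SP, _, false => Some 3
  | S0, None, false, Some SN, _, false => Some 3
  | S0, Some (SP | SN), true, None, false, false => Some 3
  | S0, Some (SP | SN), true, Some (SP | SN), _, false => Some 6
  | S0, Some SP, true, Some SP, _, true => Some 2
  | S0, Some SP, true, Some SN, _, true => Some 1
  | S0, Some SN, true, Some SP, _, true => Some 1
  | S0, Some SN, true, Some SN, _, true => Some 2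
  | SP, Some SP, false, None, false, false => Some 1
  | SN, Some SN, false, None, false, false => Some 1
  | SP, Some SP, false, Some SP, false, true => Some 1
  | SN, Some SN, false, Some SN, false, true => Some 1
  | SP, Some SP, false, Some SN, false, true => Some 0
  | SN, Some SN, false, Some SP, false, true => Some 0
  | SP, Some SP, false, Some (SP | SN), true, false => Some 4
  | SN, Some SN, false, Some (SP | SN), true, false => Some 4
  | SP, Some SP, false, Some (SP | SN), true, true => Some 0
  | SN, Some SN, false, Some (SP | SN), true, true => Some 0
  | _, _, _, _, _, _ => None
  end end.

Definition step_respects_bound (st : joint_state) (cu cv : sym) : bool :=
  match bound st, bound (fst (joint_step st cu cv)) with
  | None, _ => true
  | Some h, Some h' => h' <=? h + snd (joint_step st cu cv)
  | Some _, None => false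
  end.

Lemma step_respects_bound_all (st : joint_state) (cu cv : sym) :
  step_respects_bound st cu cv = true.
Proof.
  destruct st as [[[up [lu gu]] [lv gv]] lk];
  destruct up, lu as [[]|], gu, lv as [[]|], gv, lk, cu, cv; reflexivity.
Qed.

Lemma scan_bound (u v : nat -> sym) (n : nat) :
  exists h, bound (scan_state u v n) = Some h /\ h <= scan_value u v n.
Proof.
  induction n as [|n [h [Hh Hle]]]; [exists 0; split; reflexivity|].
  destruct (scan_succ u v n) as [-> ->].
  pose proof (step_respects_bound_all (scan_state u v n) (u n) (v n)) as C.
  unfold step_respects_bound in C. rewrite Hh in C.
  destruct (bound (fst (joint_step _ _ _))) as [h'|]; [|discriminate C].
  apply Z.leb_le in C. exists h'. split; [reflexivity | lia].
Qed.

Lemma scan_gain_linked (u v : nat -> sym) (n : nat) :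
  linked u v n = true -> prev u n = S0 -> 1 <= scan_value u v n.
Proof.
  intros Hl Hp. destruct (scan_bound u v n) as [h [Hh Hle]].
  unfold scan_state in Hh. rewrite Hl, Hp in Hh.
  destruct (word_scan u n) as [[lu gu] a], (word_scan v n) as [[lv gv] b]; cbn in Hh.
  destruct lu as [[]|], gu, lv as [[]|], gv; cbn in Hh; inversion Hh; lia.
Qed.

Lemma scan_gain_top (u v : nat -> sym) (n : nat) :
  prev u n = S0 -> fst (fst (word_scan u n)) <> None -> fst (fst (word_scan v n)) = None ->
  3 <= scan_value u v n.
Proof.
  intros Hp Hu Hv. destruct (scan_bound u v n) as [h [Hh Hle]].
  unfold scan_state in Hh. rewrite Hp in Hh.
  destruct (word_scan u n) as [[lu gu] a], (word_scan v n) as [[lv gv] b]; cbn in *.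
  subst lv. destruct lu as [[]|]; [| | |congruence];
    destruct gu, gv, (linked u v n); cbn in Hh; inversion Hh; lia.
Qed.

Definition level_pt (s x : nat) : pt := (Z.of_nat x, Z.of_nat s - Z.of_nat x).
Definition level_word (D : pt -> sym) (s : nat) (x : nat) : sym := D (level_pt s x).

Lemma level_pt_of (s : nat) (m : pt) :
  0 <= fst m -> fst m + snd m = Z.of_nat s -> level_pt s (Z.to_nat (fst m)) = m.
Proof. destruct m as [m1 m2]; unfold level_pt; cbn; intros; f_equal; lia. Qed.

Fixpoint level_count (D : pt -> sym) (s n : nat) : nat :=
  match n with
  | O => O
  | S m => (level_count D s m + (if is_nodeb D (level_pt s m) then 1 else 0))%nat
  end.

Definition level_nodes (D : pt -> sym) (s : nat) : nat := level_count D s (S s).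

Definition level_potential (D : pt -> sym) (s : nat) : Z :=
  snd (word_scan (level_word D s) (S s)).

Section Levels.
Variable D : pt -> sym.
Variable k : nat.
Hypothesis zero_outside :
  forall m, fst m < 0 \/ snd m < 0 \/ Z.of_nat k < fst m + snd m -> D m = S0.

Lemma support_in_triangle (m : pt) :
  D m <> S0 -> 0 <= fst m /\ 0 <= snd m /\ fst m + snd m <= Z.of_nat k.
Proof.
  intro H. destruct (Z_lt_le_dec (fst m) 0); [exfalso; apply H, zero_outside; lia|].
  destruct (Z_lt_le_dec (snd m) 0); [exfalso; apply H, zero_outside; lia|].
  destruct (Z_lt_le_dec (Z.of_nat k) (fst m + snd m)); [exfalso; apply H, zero_outside; lia|].
  lia.
Qed.

Lemma level_word_end (s : nat) : level_word D s (S s) = S0.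
Proof. apply zero_outside. cbn. lia. Qed.

Lemma level_count_scan (t n : nat) :
  Z.of_nat (level_count D (S t) n) = node_count (level_word D t) (level_word D (S t)) n.
Proof.
  induction n as [|n IH]; [reflexivity|].
  cbn [level_count node_count]. rewrite Nat2Z.inj_add, IH. f_equal.
  replace (is_nodeb D (level_pt (S t) n))
    with (node3 (level_word D (S t) n) (prev (level_word D t) n) (level_word D t n));
    [destruct (node3 _ _ _); reflexivity|].
  unfold is_nodeb, level_word, level_pt. cbn [fst snd]. f_equal.
  - destruct n as [|y]; cbn [prev].
    + symmetry. apply zero_outside. cbn. lia.
    + f_equal. f_equal; lia.
  - f_equal. f_equal; lia.
Qed.

(* A path of adjacent support points from level <= t to level > t contains a
   point of L_t whose neighbour m + e1 or m + e2 is in K (adjacency changes the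
   level by at most one, and the steps e1 - e2, e2 - e1 keep it). *)
Lemma path_crosses_level (t : nat) (p q : pt) :
  clos_refl_trans pt (fun x y => support D x /\ support D y /\ adjacent x y) p q ->
  fst p + snd p <= Z.of_nat t -> Z.of_nat t < fst q + snd q ->
  exists m, D m <> S0 /\ fst m + snd m = Z.of_nat t /\
    (D (fst m + 1, snd m) <> S0 \/ D (fst m, snd m + 1) <> S0).
Proof.
  intro H. apply clos_rt_rt1n in H.
  induction H as [x | x y z Hxy Hyz IH]; intros H1 H2; [lia|].
  destruct (Z_le_gt_dec (fst y + snd y) (Z.of_nat t)); [apply IH; lia|].
  destruct Hxy as [Sx [Sy [_ Hin]]].
  destruct y as [y1 y2]. cbn [fst snd In] in *.
  destruct Hin as [H|[H|[H|[H|[H|[H|[]]]]]]]; injection H as Ha Hb; try lia.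
  - exists x. split; [exact Sx|]. split; [lia|]. left.
    replace (fst x + 1, snd x) with (y1, y2) by (f_equal; lia). exact Sy.
  - exists x. split; [exact Sx|]. split; [lia|]. right.
    replace (fst x, snd x + 1) with (y1, y2) by (f_equal; lia). exact Sy.
Qed.

Hypothesis connected : connected_support D.
Hypothesis origin_in : D (0, 0) <> S0.
Variable top : pt.
Hypothesis top_in : D top <> S0.
Hypothesis top_level : fst top + snd top = Z.of_nat k.

Lemma level_zero : level_nodes D 0 = 1%nat /\ level_potential D 0 = 1.
Proof.
  unfold level_nodes, level_potential, level_count, is_nodeb, level_word, level_pt. cbn.
  rewrite (zero_outside (-1, 0)), (zero_outside (0, -1)) by (cbn; lia).
  destruct (D (0, 0)); [congruence | |]; split; reflexivity.
Qed.

(* Inner levels: connectivity links L_t to L_(t+1), which gives the gain 1. *)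
Lemma level_gain (t : nat) : (S t <= k)%nat ->
  1 <= 2 * Z.of_nat (level_nodes D (S t)) + level_potential D (S t) - level_potential D t.
Proof.
  intro Ht. unfold level_nodes, level_potential.
  rewrite level_count_scan, <- (word_scan_zero_letter _ _ (level_word_end t)).
  apply scan_gain_linked; [|apply level_word_end].
  destruct (path_crosses_level t (0, 0) top (connected _ _ origin_in top_in))
    as [m [Hm [Hml Hup]]]; [cbn; lia | lia |].
  destruct (support_in_triangle m Hm) as [Hm1 [Hm2 _]].
  pose proof (level_pt_of t m Hm1 Hml) as Em.
  destruct Hup as [Hup|Hup].
  - apply (linked_intro _ _ _ (S (Z.to_nat (fst m)))); [lia|].
    cbn [prev]. unfold level_word. rewrite Em, (nz_true _ Hm), andb_true_r.
    apply nz_true. rewrite <- (level_pt_of (S t) (fst m + 1, snd m)) in Hup by (cbn; lia).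
    cbn [fst] in Hup. rewrite Z2Nat.inj_add in Hup by lia. rewrite Nat.add_1_r in Hup.
    exact Hup.
  - apply (linked_intro _ _ _ (Z.to_nat (fst m))); [lia|].
    unfold level_word. rewrite Em, (nz_true _ Hm), orb_true_r, andb_true_r.
    apply nz_true. rewrite <- (level_pt_of (S t) (fst m, snd m + 1)) in Hup by (cbn; lia).
    exact Hup.
Qed.

(* Top: L_k meets K and L_(k+1) does not, which gives the gain 3. *)
Lemma level_gain_top :
  3 <= 2 * Z.of_nat (level_nodes D (S k)) - level_potential D k.
Proof.
  unfold level_nodes, level_potential.
  rewrite level_count_scan, <- (word_scan_zero_letter _ _ (level_word_end k)).
  assert (Hempty : word_scan (level_word D (S k)) (S (S k)) = ((None, false), 0)).
  { apply word_scan_zero. intros x _. apply zero_outside. unfold level_pt. cbn [fst snd]. lia. }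
  pose proof (scan_gain_top (level_word D k) (level_word D (S k)) (S (S k))
                (level_word_end k)) as G.
  unfold scan_value in G. rewrite Hempty in G. cbn [fst snd] in G.
  destruct (support_in_triangle top top_in) as [Ht1 [Ht2 _]].
  enough (Hlow : fst (fst (word_scan (level_word D k) (S (S k)))) <> None)
    by (specialize (G Hlow eq_refl); lia).
  apply (word_scan_nonzero _ _ (Z.to_nat (fst top))); [lia|].
  unfold level_word. rewrite level_pt_of by lia. exact top_in.
Qed.

End Levels.

Fixpoint nodes_upto (D : pt -> sym) (j : nat) : nat :=
  match j with
  | O => level_nodes D 0
  | S j' => (nodes_upto D j' + level_nodes D (S j'))%nat
  end.

Definition level_node_list (D : pt -> sym) (s : nat) : list pt :=
  map (level_pt s) (filter (fun x => is_nodeb D (level_pt s x)) (seq 0 (S s))).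

Fixpoint node_list (D : pt -> sym) (j : nat) : list pt :=
  match j with
  | O => level_node_list D 0
  | S j' => node_list D j' ++ level_node_list D (S j')
  end.

Lemma length_level_node_list (D : pt -> sym) (s : nat) :
  length (level_node_list D s) = level_nodes D s.
Proof.
  unfold level_node_list, level_nodes. rewrite length_map.
  generalize (S s) as n. induction n as [|n IH]; [reflexivity|].
  rewrite seq_S, filter_app, length_app, IH. cbn.
  destruct (is_nodeb D (level_pt s n)); reflexivity.
Qed.

Lemma length_node_list (D : pt -> sym) (j : nat) : length (node_list D j) = nodes_upto D j.
Proof.
  induction j as [|j IH]; cbn [node_list nodes_upto];
    rewrite ?length_app, ?IH, length_level_node_list; reflexivity.
Qed.

Lemma in_level_node_list (D : pt -> sym) (s : nat) (a : pt) :
  In a (level_node_list D s) <->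
  exists x, (x <= s)%nat /\ a = level_pt s x /\ is_nodeb D a = true.
Proof.
  unfold level_node_list. rewrite in_map_iff. split.
  - intros [x [<- Hx]]. apply filter_In in Hx as [Hx1 Hx2]. apply in_seq in Hx1.
    exists x. split; [lia | auto].
  - intros [x [Hx [-> Hn]]]. exists x. split; [reflexivity|].
    apply filter_In. split; [apply in_seq; lia | exact Hn].
Qed.

Lemma in_node_list (D : pt -> sym) (j : nat) (a : pt) :
  In a (node_list D j) <-> exists s, (s <= j)%nat /\ In a (level_node_list D s).
Proof.
  induction j as [|j IH]; cbn [node_list].
  - split; [intro H; exists O; split; [lia | exact H]|].
    intros [s [Hs H]]. replace s with O in H by lia. exact H.
  - rewrite in_app_iff, IH. split.
    + intros [[s [Hs H]]|H]; [exists s | exists (S j)]; split; auto; lia.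
    + intros [s [Hs H]]. destruct (Nat.eq_dec s (S j)) as [->|Hne]; [right; exact H|].
      left. exists s. split; [lia | exact H].
Qed.

Lemma level_node_list_level (D : pt -> sym) (s : nat) (a : pt) :
  In a (level_node_list D s) -> fst a + snd a = Z.of_nat s.
Proof. rewrite in_level_node_list. intros [x [_ [-> _]]]. cbn. lia. Qed.

Lemma NoDup_node_list (D : pt -> sym) (j : nat) : NoDup (node_list D j).
Proof.
  assert (Hlevel : forall s, NoDup (level_node_list D s)).
  { intro s. apply Injective_map_NoDup; [|apply NoDup_filter, seq_NoDup].
    intros x y H. injection H. lia. }
  induction j as [|j IH]; cbn; [apply Hlevel|].
  apply NoDup_app; [exact IH | apply Hlevel|].
  intros a H1 H2. apply in_node_list in H1 as [s [Hs H1]].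
  apply level_node_list_level in H1, H2. lia.
Qed.

(* If K lies in the triangle of height k, every node lies on a level <= k+1,
   so the list of nodes up to level k+1 enumerates all nodes. *)
Lemma num_nodes_upto (D : pt -> sym) (k : nat) :
  (forall m, fst m < 0 \/ snd m < 0 \/ Z.of_nat k < fst m + snd m -> D m = S0) ->
  num_nodes D (nodes_upto D (S k)).
Proof.
  intro zero_outside.
  exists (node_list D (S k)). split; [apply NoDup_node_list|].
  split; [|apply length_node_list].
  intro a. rewrite is_node_iff, in_node_list. split.
  - intro Hn. destruct a as [a1 a2].
    assert (Hb : 0 <= a1 /\ 0 <= a2 /\ a1 + a2 <= Z.of_nat k + 1).
    { destruct (node3_nonzero _ _ _ Hn) as [H|[H|H]];
        apply (support_in_triangle D k zero_outside) in H; cbn in H; lia. }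
    exists (Z.to_nat (a1 + a2)). split; [lia|].
    apply in_level_node_list. exists (Z.to_nat a1). split; [lia|].
    split; [|exact Hn]. symmetry. apply (level_pt_of _ (a1, a2)); cbn; lia.
  - intros [s [_ H]]. apply in_level_node_list in H as [x [_ [_ Hn]]]. exact Hn.
Qed.

Lemma nodes_upto_bound (D : pt -> sym) (k : nat) (top : pt) :
  (forall m, fst m < 0 \/ snd m < 0 \/ Z.of_nat k < fst m + snd m -> D m = S0) ->
  connected_support D -> D (0, 0) <> S0 -> D top <> S0 ->
  fst top + snd top = Z.of_nat k ->
  Z.of_nat k + 6 <= 2 * Z.of_nat (nodes_upto D (S k)).
Proof.
  intros zero_outside connected origin_in top_in top_level.
  assert (Hchain : forall j, (j <= k)%nat ->
            3 + Z.of_nat j <= 2 * Z.of_nat (nodes_upto D j) + level_potential D j).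
  { induction j as [|j IH]; intro Hj.
    - cbn [nodes_upto]. destruct (level_zero D k zero_outside origin_in) as [-> ->]. lia.
    - pose proof (level_gain D k zero_outside connected origin_in top top_in top_level j Hj).
      specialize (IH ltac:(lia)). cbn [nodes_upto]. rewrite Nat2Z.inj_add. lia. }
  pose proof (Hchain k (le_n _)).
  pose proof (level_gain_top D k zero_outside top top_in top_level).
  cbn [nodes_upto]. rewrite Nat2Z.inj_add. lia.
Qed.

Theorem mainTheorem5 (D : pt -> sym) (d : Z) :
  newton_diagram D ->
  support_size D d ->
  connected_support D ->
  support D (0, 0) ->
  exists n : nat, num_nodes D n /\ d + 5 <= 2 * Z.of_nat n.
Proof.
  intros [_ [_ Hnn]] [k [a1 [a2 [[[top [Htop Htopl]] Hk] [[[m1 [Hm1 <-]] Ha1]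
          [[[m2 [Hm2 <-]] Ha2] ->]]]]]] connected origin_in.
  (* The origin forces a = 0, so d = k + 1. *)
  pose proof (Hnn _ Hm1). pose proof (Hnn _ Hm2).
  pose proof (Ha1 _ origin_in). pose proof (Ha2 _ origin_in). pose proof (Hk _ origin_in).
  cbn [fst snd] in *.
  assert (zero_outside : forall m,
            fst m < 0 \/ snd m < 0 \/ Z.of_nat (Z.to_nat k) < fst m + snd m -> D m = S0).
  { intros m Hm. destruct (D m) eqn:Em; [reflexivity| |];
      (assert (Hs : support D m) by (unfold support; congruence);
       pose proof (Hnn _ Hs); pose proof (Hk _ Hs); lia). }
  exists (nodes_upto D (S (Z.to_nat k))). split.
  - exact (num_nodes_upto D _ zero_outside).
  - pose proof (nodes_upto_bound D (Z.to_nat k) top zero_outside connected origin_in Htop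
                  ltac:(lia)). lia.
Qed.
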